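(* Let $(X,d)$ be a complete metric space with (metric) uniform normal structure and property (P) for nets. Let $\mathcal S$ be a semigroup whose preorder $\le$ is total, and suppose the action $(\mathcal S,X)$ is strong-orbit $k$-Lipschitzian with $k<\tilde N(X)^{-1/2}$. If some orbit is bounded, then there is $z\in X$ such that $sz=z$ for all $s\in\mathcal S$.
   Context: A semigroup action is a map $\mathcal S\times X\to X$, $(s,x)\mapsto sx$, with $(st)x=s(tx)$. $\mathcal S^1$ is $\mathcal S$ with an identity adjoined. The preorder on $\mathcal S$: $s\le t$ iff $t\in\mathcal S^1s=\{s\}\cup\mathcal S s$; it is total if for all $s,t$, $s\le t$ or $t\le s$. The orbit of $x$ is $o(x)=\{x\}\cup\{sx:s\in\mathcal S\}$; $D(x,C)=\sup\{d(x,y):y\in C\}$. The action is strong-orbit $k$-Lipschitzian if $D(sx,o(sy))\le k\,D(x,o(y))$ for all $s\in\mathcal S$, $x,y\in X$. A set is admissible if it is a nonempty intersection of closed balls; ${\rm cov}(C)$ is the intersection of all closed balls containing $C$. $r(A)=\inf_{x\in A}D(x,A)$, $\delta(A)=\sup\{d(x,y):x,y\in A\}$; $\tilde N(X)=\sup\{r(A)/\delta(A)\}$ over admissible $A$ with $\delta(A)>0$, and $X$ has (metric) uniform normal structure if $\tilde N(X)<1$. Property (P) for nets: for any directed preordered index set and any two bounded nets $\{x_s\}$, $\{z_s\}$ in $X$ with $z_s\in{\rm cov}(\{x_j:j\ge s\})$, there is $z\in\bigcap_s{\rm cov}(\{z_j:j\ge s\})$ with $\limsup_s d(z,x_s)\le\limsup_t\limsup_s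 d(z_t,x_s)$. *)

From Stdlib Require Import Reals.
From Coquelicot Require Import Rbar Lub.
Open Scope R_scope.

Section Metric.
Context {X : Type} (d : X -> X -> R).

Record is_metric : Prop := {
  dist_ge0 : forall x y, 0 <= d x y;
  dist_eq0 : forall x y, d x y = 0 <-> x = y;
  dist_sym : forall x y, d x y = d y x;
  dist_tri : forall x y z, d x z <= d x y + d y z }.

Definition complete_metric : Prop :=
  forall u : nat -> X,
    (forall eps, 0 < eps -> exists N, forall m n, (N <= m)%nat -> (N <= n)%nat ->
        d (u m) (u n) < eps) ->
    exists x, forall eps, 0 < eps -> exists N, forall n, (N <= n)%nat -> d (u n) x < eps.

Definition bounded_set (C : X -> Prop) : Prop :=
  exists c r, forall y, C y -> d c y <= r.

Definition Dist (x : X) (C : X -> Prop) : Rbar :=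
  Lub_Rbar (fun t => exists y, C y /\ t = d x y).

Definition diam (A : X -> Prop) : Rbar :=
  Lub_Rbar (fun t => exists x y, A x /\ A y /\ t = d x y).

(* r(A) = inf_{x in A} D(x,A)  (for bounded A all D(x,A) are finite) *)
Definition cheb_radius (A : X -> Prop) : Rbar :=
  Glb_Rbar (fun t => exists x, A x /\ Dist x A = Finite t).

(* admissible: a nonempty intersection of (a family of) closed balls;
   a family of balls is a predicate on (center, radius) *)
Definition admissible (A : X -> Prop) : Prop :=
  (exists x, A x) /\
  exists Balls : X -> R -> Prop,
    forall x, A x <-> (forall c r, Balls c r -> d c x <= r).

Definition cov (C : X -> Prop) (x : X) : Prop :=
  forall c r, (forall y, C y -> d c y <= r) -> d c x <= r.

Definition Ntilde : Rbar :=
  Lub_Rbar (fun q => exists A, admissible A /\ bounded_set A /\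
     exists rA dA, cheb_radius A = Finite rA /\ diam A = Finite dA /\
       0 < dA /\ q = rA / dA).

Definition uniform_normal_structure : Prop := Rbar_lt Ntilde (Finite 1).

Definition net_limsup {I : Type} (le : I -> I -> Prop) (f : I -> R) : Rbar :=
  Glb_Rbar (fun t => exists s, Lub_Rbar (fun u => exists j, le s j /\ u = f j) = Finite t).

Definition bounded_net {I : Type} (x : I -> X) : Prop :=
  exists c r, forall s, d c (x s) <= r.

Definition property_P_nets : Prop :=
  forall (I : Type) (le : I -> I -> Prop),
    inhabited I ->
    (forall a, le a a) ->
    (forall a b c, le a b -> le b c -> le a c) ->
    (forall a b, exists c, le a c /\ le b c) ->
    forall x z : I -> X,
      bounded_net x -> bounded_net z ->
      (forall s, cov (fun y => exists j, le s j /\ y = x j) (z s)) ->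
      exists zz : X,
        (forall s, cov (fun y => exists j, le s j /\ y = z j) zz) /\
        Rbar_le (net_limsup le (fun s => d zz (x s)))
                (net_limsup le (fun t => real (net_limsup le (fun s => d (z t) (x s))))).

End Metric.

(* N^{-1/2} as an extended real; sup of the empty family (-oo) and 0 give +oo *)
Definition inv_sqrt_Rbar (N : Rbar) : Rbar :=
  match N with
  | Finite t => if Rlt_dec 0 t then Finite (/ sqrt t) else p_infty
  | p_infty => Finite 0
  | m_infty => p_infty
  end.

Section Action.
Context {S X : Type} (mul : S -> S -> S) (act : S -> X -> X).

Definition is_semigroup : Prop := forall a b c, mul (mul a b) c = mul a (mul b c).

Definition is_action : Prop := forall s t x, act (mul s t) x = act s (act t x).

Definition sg_le (s t : S) : Prop := t = s \/ exists u, t = mul u s.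

Definition sg_le_total : Prop := forall s t, sg_le s t \/ sg_le t s.

Definition orbit (x : X) (y : X) : Prop := y = x \/ exists s, y = act s x.

(* D(sx, o(sy)) <= k D(x, o(y)); read as vacuous when D(x,o(y)) = +oo *)
Definition strong_orbit_lipschitz (d : X -> X -> R) (k : R) : Prop :=
  forall s x y r, Rbar_le (Dist d x (orbit y)) (Finite r) ->
    Rbar_le (Dist d (act s x) (orbit (act s y))) (Finite (k * r)).

End Action.

(* Call [x] b-almost fixed if [d(x, tx) <= b] for all [t].  For such [x],
   strong-orbit Lipschitz continuity together with totality of the preorder
   bounds the diameter of every orbit tail [o(sx) = {jx : j >= s}] by [k b].
   Uniform normal structure gives each [cov(o(sx))] a centre within [N' k b]
   of the tail (any [N' > N~(X)]), and property (P) merges these centres into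
   a point [z] lying in every [cov(o(sx))], hence within [b] of [x], and
   asymptotically within [N' k b] of the orbit.  One more application of the
   Lipschitz condition makes [z] a [k^2 N' b]-almost fixed point.  Since
   [k < N~(X)^(-1/2)], [N'] can be chosen with [k^2 N' < 1]; iterating from a
   point with bounded orbit gives a Cauchy sequence whose limit is fixed. *)

From Pilot Require Import Defs.
From Stdlib Require Import Reals Lra Lia Classical IndefiniteDescription.
From Coquelicot Require Import Rbar Lub.
Open Scope R_scope.

Lemma Lub_Rbar_ub (E : R -> Prop) (x : R) : E x -> Rbar_le x (Lub_Rbar E).
Proof. intros Hx. exact (proj1 (Lub_Rbar_correct E) x Hx). Qed.

Lemma Lub_Rbar_le (E : R -> Prop) (M : R) : (forall x, E x -> x <= M) -> Rbar_le (Lub_Rbar E) M.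
Proof. intros HM. apply (proj2 (Lub_Rbar_correct E)). exact HM. Qed.

Lemma Lub_Rbar_finite (E : R -> Prop) (x0 M : R) : E x0 -> (forall x, E x -> x <= M) ->
  exists l, Lub_Rbar E = Finite l /\ x0 <= l /\ l <= M.
Proof.
  intros Hx0 HM.
  pose proof (Lub_Rbar_ub E x0 Hx0) as Hlo. pose proof (Lub_Rbar_le E M HM) as Hhi.
  destruct (Lub_Rbar E) as [l| |]; try contradiction. now exists l.
Qed.

Lemma Glb_Rbar_lb (E : R -> Prop) (x : R) : E x -> Rbar_le (Glb_Rbar E) x.
Proof. intros Hx. exact (proj1 (Glb_Rbar_correct E) x Hx). Qed.

Lemma Glb_Rbar_finite (E : R -> Prop) (x0 m : R) : E x0 -> (forall x, E x -> m <= x) ->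
  exists l, Glb_Rbar E = Finite l.
Proof.
  intros Hx0 Hm.
  pose proof (Glb_Rbar_lb E x0 Hx0) as Hhi.
  assert (Hlo : Rbar_le m (Glb_Rbar E)) by (apply (proj2 (Glb_Rbar_correct E)); exact Hm).
  destruct (Glb_Rbar E) as [l| |]; try contradiction. now exists l.
Qed.

Lemma Glb_Rbar_lt (E : R -> Prop) (M : R) : Rbar_lt (Glb_Rbar E) M -> exists t, E t /\ t < M.
Proof.
  intros HM. apply NNPP. intros Hno.
  assert (Hlb : Rbar_le M (Glb_Rbar E)).
  { apply (proj2 (Glb_Rbar_correct E)). intros t Ht.
    apply Rnot_lt_le. intros Hlt. apply Hno. now exists t. }
  exact (Rbar_lt_not_le _ _ HM Hlb).
Qed.

Section NetLimsup.
Context {I : Type} (le : I -> I -> Prop) (f : I -> R).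

Lemma net_limsup_le s0 (M : R) :
  le s0 s0 -> (forall j, le s0 j -> f j <= M) -> Rbar_le (net_limsup le f) M.
Proof.
  intros Hrefl HM.
  destruct (Lub_Rbar_finite (fun u => exists j, le s0 j /\ u = f j) (f s0) M)
    as [l [Hl [_ HlM]]].
  - now exists s0.
  - intros u [j [Hj ->]]. auto.
  - apply Rbar_le_trans with l; [|exact HlM].
    apply Glb_Rbar_lb. now exists s0.
Qed.

Lemma net_limsup_lt (M : R) : Rbar_lt (net_limsup le f) M -> exists s, forall j, le s j -> f j < M.
Proof.
  intros HM. destruct (Glb_Rbar_lt _ M HM) as [t [[s Hs] Ht]].
  exists s. intros j Hj.
  assert (Hfj : Rbar_le (f j) t).
  { rewrite <- Hs. apply Lub_Rbar_ub. now exists j. }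
  simpl in Hfj. lra.
Qed.

End NetLimsup.

Section MetricSpace.
Context {X : Type} (d : X -> X -> R) (Hm : is_metric d).

Lemma dist_refl x : d x x = 0.
Proof. now apply (Defs.dist_eq0 d Hm). Qed.

Lemma Dist_le x C (r : R) : (forall y, C y -> d x y <= r) -> Rbar_le (Dist d x C) r.
Proof. intros Hr. apply Lub_Rbar_le. now intros t [y [Hy ->]]; apply Hr. Qed.

Lemma Dist_le_dist x C (r : R) y : Rbar_le (Dist d x C) r -> C y -> d x y <= r.
Proof.
  intros Hr Hy. assert (Hxy : Rbar_le (d x y) (Dist d x C)) by (apply Lub_Rbar_ub; eauto).
  exact (Rbar_le_trans _ _ (Finite r) Hxy Hr).
Qed.

Lemma cov_incl C y : C y -> cov d C y.
Proof. intros Hy c r Hr. now apply Hr. Qed.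

Lemma cov_sub C C' z : (forall y, C y -> cov d C' y) -> cov d C z -> cov d C' z.
Proof. intros HC Hz c r Hr. apply Hz. intros y Hy. now apply HC. Qed.

Lemma cov_dist_le C D u v :
  (forall y y', C y -> C y' -> d y y' <= D) -> cov d C u -> cov d C v -> d u v <= D.
Proof.
  intros HC Hu Hv. apply Hv. intros y Hy.
  rewrite (Defs.dist_sym d Hm). apply Hu. intros y' Hy'. now apply HC.
Qed.

Lemma cov_admissible C y0 : C y0 -> admissible d (cov d C).
Proof.
  intros Hy0. split; [exists y0; now apply cov_incl|].
  now exists (fun c r => forall y, C y -> d c y <= r).
Qed.

(* Chebyshev centres: [r(A) <= N~ * delta(A) < N' * delta(A)], and the
   infimum defining [r(A)] is approached by some [D(z, A)]. *)
Lemma admissible_center (A : X -> Prop) (N' D : R) :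
  Rbar_lt (Ntilde d) N' -> 0 <= N' -> admissible d A -> bounded_set d A ->
  (forall x y, A x -> A y -> d x y <= D) ->
  exists z, A z /\ forall y, A y -> d z y <= N' * D.
Proof.
  intros HN HN' Had Hbd HD. pose proof Had as [[a Ha] _].
  destruct (Lub_Rbar_finite (fun t => exists x y, A x /\ A y /\ t = d x y) (d a a) D)
    as [dA [HdA [HdA0 HdAD]]].
  { exists a, a; auto. }
  { intros t [x [y [Hx [Hy ->]]]]. auto. }
  assert (Hpair : forall x y, A x -> A y -> d x y <= dA).
  { intros x y Hx Hy.
    assert (Hxy : Rbar_le (d x y) (diam d A)) by (apply Lub_Rbar_ub; exists x, y; auto).
    unfold diam in Hxy. now rewrite HdA in Hxy. }
  rewrite dist_refl in HdA0.
  destruct (Rle_lt_or_eq_dec 0 dA HdA0) as [HdApos | <-].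
  - destruct (Lub_Rbar_finite (fun t => exists y, A y /\ t = d a y) (d a a) dA)
      as [ta [Hta _]].
    { exists a; auto. }
    { intros t [y [Hy ->]]. auto. }
    destruct (Glb_Rbar_finite (fun t => exists x, A x /\ Dist d x A = Finite t) ta 0)
      as [rA Hcheb].
    { now exists a. }
    { intros t [x [Hx Ht]]. rewrite <- (dist_refl x).
      apply (Dist_le_dist x A t x); [rewrite Ht; apply Rle_refl | exact Hx]. }
    assert (Hratio : Rbar_le (rA / dA) (Ntilde d)).
    { apply Lub_Rbar_ub. exists A. split; [exact Had|]. split; [exact Hbd|].
      exists rA, dA. auto. }
    assert (Hcheb_lt : Rbar_lt (cheb_radius d A) (N' * dA)).
    { unfold cheb_radius. rewrite Hcheb. simpl.
      pose proof (Rbar_le_lt_trans _ _ _ Hratio HN) as Hlt. simpl in Hlt.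
      apply Rmult_lt_reg_r with (/ dA); [now apply Rinv_0_lt_compat|].
      rewrite Rmult_assoc, Rinv_r, Rmult_1_r; lra. }
    destruct (Glb_Rbar_lt _ _ Hcheb_lt) as [t [[z [Hz Hzt]] Ht]].
    exists z. split; [exact Hz|]. intros y Hy.
    assert (Hzy : d z y <= t).
    { apply (Dist_le_dist z A t y); [rewrite Hzt; apply Rle_refl | exact Hy]. }
    assert (N' * dA <= N' * D) by (apply Rmult_le_compat_l; lra). lra.
  - exists a. split; [exact Ha|]. intros y Hy.
    assert (HD0 : 0 <= D) by (rewrite <- (dist_refl a); auto).
    specialize (Hpair a y Ha Hy). assert (0 <= N' * D) by (apply Rmult_le_pos; lra). lra.
Qed.
End MetricSpace.

Lemma Rle_mul_plus_epsilon (a k M : R) :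
  0 <= k -> (forall eps, 0 < eps -> a <= k * (M + eps)) -> a <= k * M.
Proof.
  intros Hk Ha. apply Rle_plus_epsilon. intros eps Heps.
  specialize (Ha (eps / (k + 1)) ltac:(apply Rdiv_lt_0_compat; lra)).
  assert (k * (eps / (k + 1)) <= eps).
  { apply Rmult_le_reg_r with (k + 1); [lra|].
    replace (k * (eps / (k + 1)) * (k + 1)) with (k * eps) by (field; lra). nra. }
  nra.
Qed.

Lemma pow_eventually_lt (c B eps : R) :
  0 <= c < 1 -> 0 <= B -> 0 < eps -> exists N, forall n, (N <= n)%nat -> B * c ^ n < eps.
Proof.
  intros Hc HB Heps.
  destruct (pow_lt_1_zero c ltac:(rewrite Rabs_pos_eq; lra) (eps / (B + 1))
              ltac:(apply Rdiv_lt_0_compat; lra)) as [N HN].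
  exists N. intros n Hn. specialize (HN n Hn).
  assert (Hcn : 0 <= c ^ n) by (apply pow_le; lra).
  rewrite Rabs_pos_eq in HN by exact Hcn.
  apply Rmult_lt_compat_l with (r := B + 1) in HN; [|lra].
  replace ((B + 1) * (eps / (B + 1))) with eps in HN by (field; lra).
  nra.
Qed.

Lemma inv_sqrt_Rbar_pos (N : Rbar) : Rbar_lt N 1 -> Rbar_lt 0 (inv_sqrt_Rbar N).
Proof.
  destruct N as [t| |]; simpl; try tauto.
  intros _. destruct (Rlt_dec 0 t) as [Ht|Ht]; simpl; [|exact I].
  now apply Rinv_0_lt_compat, sqrt_lt_R0.
Qed.

Lemma exists_contraction_ratio (N : Rbar) (k : R) :
  0 <= k -> Rbar_lt N 1 -> Rbar_lt k (inv_sqrt_Rbar N) ->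
  exists N', 0 <= N' /\ Rbar_lt N N' /\ k * k * N' < 1.
Proof.
  intros Hk HN1 HkN.
  assert (Hm : exists m, 0 <= m /\ Rbar_le N m /\ k * k * m < 1).
  { destruct N as [t| |]; simpl in HN1, HkN; try contradiction.
    - destruct (Rlt_dec 0 t) as [Ht|Ht].
      + exists t. split; [lra|]. split; [apply Rle_refl|].
        assert (Hs : 0 < sqrt t) by now apply sqrt_lt_R0.
        assert (Hks : k * sqrt t < 1).
        { apply Rmult_lt_compat_r with (r := sqrt t) in HkN; [|exact Hs].
          now rewrite Rinv_l in HkN by lra. }
        rewrite <- (sqrt_sqrt t) by lra.
        assert (0 <= k * sqrt t) by (apply Rmult_le_pos; lra). nra.
      + exists 0. split; [lra|]. split; [simpl; lra|]. lra.
    - exists 0. split; [lra|]. split; [exact I|]. lra. }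
  destruct Hm as [m [Hm0 [HNm Hkm]]].
  set (a := k * k) in *. assert (Ha : 0 <= a) by (unfold a; nra).
  exists (m + (1 - a * m) / (a + 1)).
  assert (Hgap : 0 < (1 - a * m) / (a + 1)) by (apply Rdiv_lt_0_compat; lra).
  split; [lra|]. split.
  - apply Rbar_le_lt_trans with m; [exact HNm|]. simpl. lra.
  - assert (a * ((1 - a * m) / (a + 1)) < 1 - a * m).
    { apply Rmult_lt_reg_r with (a + 1); [lra|].
      replace (a * ((1 - a * m) / (a + 1)) * (a + 1)) with (a * (1 - a * m)) by (field; lra).
      nra. }
    nra.
Qed.

Section GeometricChain.
Context {X : Type} (d : X -> X -> R) (Hm : is_metric d).

Lemma geometric_steps_dist (u : nat -> X) (B c : R) :
  0 <= B -> 0 <= c < 1 -> (forall n, d (u n) (u (S n)) <= B * c ^ n) ->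
  forall m n, (m <= n)%nat -> d (u m) (u n) <= B / (1 - c) * c ^ m.
Proof.
  intros HB Hc Hstep.
  assert (Hsum : forall m p, d (u m) (u (m + p)%nat) <= B / (1 - c) * (c ^ m - c ^ (m + p))).
  { intros m p. induction p as [|p IH].
    - rewrite Nat.add_0_r, (dist_refl d Hm), Rminus_diag, Rmult_0_r. lra.
    - rewrite Nat.add_succ_r.
      eapply Rle_trans; [apply (Defs.dist_tri d Hm _ (u (m + p)%nat))|].
      specialize (Hstep (m + p)%nat).
      replace (B / (1 - c) * (c ^ m - c ^ S (m + p)))
        with (B / (1 - c) * (c ^ m - c ^ (m + p)) + B * c ^ (m + p)) by (simpl; field; lra).
      lra. }
  intros m n Hmn. replace n with (m + (n - m))%nat by lia.
  eapply Rle_trans; [apply Hsum|].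
  assert (0 <= B / (1 - c) * c ^ (m + (n - m))).
  { apply Rmult_le_pos; [|apply pow_le; lra].
    unfold Rdiv. apply Rmult_le_pos; [lra | apply Rlt_le, Rinv_0_lt_compat; lra]. }
  lra.
Qed.

Lemma geometric_steps_cauchy (u : nat -> X) (B c : R) :
  0 <= B -> 0 <= c < 1 -> (forall n, d (u n) (u (S n)) <= B * c ^ n) ->
  forall eps, 0 < eps -> exists N, forall m n, (N <= m)%nat -> (N <= n)%nat ->
    d (u m) (u n) < eps.
Proof.
  intros HB Hc Hstep eps Heps.
  assert (HB' : 0 <= B / (1 - c)).
  { unfold Rdiv. apply Rmult_le_pos; [lra | apply Rlt_le, Rinv_0_lt_compat; lra]. }
  destruct (pow_eventually_lt c (B / (1 - c)) eps Hc HB' Heps) as [N HN].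
  exists N. intros m n Hm' Hn'. destruct (Nat.le_ge_cases m n) as [Hmn|Hnm].
  - eapply Rle_lt_trans; [apply (geometric_steps_dist u B c); auto | auto].
  - rewrite (Defs.dist_sym d Hm).
    eapply Rle_lt_trans; [apply (geometric_steps_dist u B c); auto | auto].
Qed.

Lemma geometric_chain_limit (P : X -> R -> Prop) (c b0 : R) x0 :
  complete_metric d -> 0 <= c < 1 -> 0 <= b0 -> P x0 b0 ->
  (forall x b b', b <= b' -> P x b -> P x b') ->
  (forall x b, 0 <= b -> P x b -> exists x', d x x' <= b /\ P x' (c * b)) ->
  exists z, forall eps, 0 < eps -> exists y, d z y <= eps /\ P y eps.
Proof.
  intros Hcomp Hc Hb0 Hx0 Hmono Hstep.
  destruct (functional_choice (fun (p : X * R) x' =>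
      0 <= snd p -> P (fst p) (snd p) -> d (fst p) x' <= snd p /\ P x' (c * snd p)))
    as [next Hnext].
  { intros [x b]. destruct (classic (0 <= b /\ P x b)) as [[Hb Hx]|Hno].
    - destruct (Hstep x b Hb Hx) as [x' Hx']. now exists x'.
    - exists x. intros Hb Hx. now contradiction Hno. }
  set (u := fix u n := match n with O => x0 | S m => next (u m, b0 * c ^ m) end).
  assert (Hbn : forall n, 0 <= b0 * c ^ n).
  { intro n. apply Rmult_le_pos; [lra | apply pow_le; lra]. }
  assert (Hu : forall n, P (u n) (b0 * c ^ n)).
  { induction n as [|n IH]; simpl; [now rewrite Rmult_1_r|].
    replace (b0 * (c * c ^ n)) with (c * (b0 * c ^ n)) by ring.
    exact (proj2 (Hnext (u n, b0 * c ^ n) (Hbn n) IH)). }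
  assert (Hsteps : forall n, d (u n) (u (S n)) <= b0 * c ^ n).
  { intro n. exact (proj1 (Hnext (u n, b0 * c ^ n) (Hbn n) (Hu n))). }
  destruct (Hcomp u (geometric_steps_cauchy u b0 c Hb0 Hc Hsteps)) as [z Hz].
  exists z. intros eps Heps.
  destruct (Hz eps Heps) as [N1 HN1].
  destruct (pow_eventually_lt c b0 eps Hc Hb0 Heps) as [N2 HN2].
  exists (u (Nat.max N1 N2)). split.
  - rewrite (Defs.dist_sym d Hm). apply Rlt_le, HN1. lia.
  - apply Hmono with (b0 * c ^ Nat.max N1 N2); [apply Rlt_le, HN2; lia | apply Hu].
Qed.

End GeometricChain.

Section SemigroupPreorder.
Context {S : Type} (mul : S -> S -> S).

Lemma sg_le_refl s : sg_le mul s s.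
Proof. now left. Qed.

Lemma sg_le_trans s t u : is_semigroup mul -> sg_le mul s t -> sg_le mul t u -> sg_le mul s u.
Proof.
  intros Hsg [->|[a ->]] [->|[b ->]].
  - now left.
  - right. now exists b.
  - right. now exists a.
  - right. exists (mul b a). now rewrite Hsg.
Qed.

Lemma sg_le_directed s t : sg_le_total mul -> exists u, sg_le mul s u /\ sg_le mul t u.
Proof.
  intros Htot. destruct (Htot s t) as [Hst|Hts].
  - exists t. split; [exact Hst | apply sg_le_refl].
  - exists s. split; [apply sg_le_refl | exact Hts].
Qed.

End SemigroupPreorder.

Section SemigroupAction.
Context {X S : Type} (d : X -> X -> R) (mul : S -> S -> S) (act : S -> X -> X).
Hypotheses (Hm : is_metric d) (Hsg : is_semigroup mul) (Hact : is_action mul act).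

Lemma strong_orbit_lipschitz_mono (k k' : R) :
  k <= k' -> strong_orbit_lipschitz act d k -> strong_orbit_lipschitz act d k'.
Proof.
  intros Hkk' Hlip s x y r Hr.
  assert (Hr0 : 0 <= r).
  { apply Rle_trans with (d x y); [apply (Defs.dist_ge0 d Hm)|].
    apply (Dist_le_dist d x (orbit act y)); [exact Hr | now left]. }
  eapply Rbar_le_trans; [exact (Hlip s x y r Hr)|].
  simpl. now apply Rmult_le_compat_r.
Qed.

Definition displacement_le (x : X) (b : R) : Prop := forall t, d x (act t x) <= b.

Lemma bounded_orbit_displacement x :
  bounded_set d (orbit act x) -> exists b, 0 <= b /\ displacement_le x b.
Proof.
  intros [c [r Hr]].
  assert (Hcx : d c x <= r) by (apply Hr; now left).
  exists (2 * r). split.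
  - pose proof (Defs.dist_ge0 d Hm c x). lra.
  - intros t. eapply Rle_trans; [apply (Defs.dist_tri d Hm _ c)|].
    rewrite (Defs.dist_sym d Hm x c).
    assert (d c (act t x) <= r) by (apply Hr; right; now exists t). lra.
Qed.

Lemma orbit_act_tail s x y :
  (exists j, sg_le mul s j /\ y = act j x) <-> orbit act (act s x) y.
Proof.
  split.
  - intros [j [[<-|[u ->]] ->]]; [now left|]. right. exists u. apply Hact.
  - intros [->|[u ->]].
    + exists s. split; [apply sg_le_refl | reflexivity].
    + exists (mul u s). split; [right; now exists u | symmetry; apply Hact].
Qed.

Lemma orbit_act_mono s j x y :
  sg_le mul s j -> orbit act (act j x) y -> orbit act (act s x) y.
Proof.
  intros Hsj Hy. apply orbit_act_tail in Hy as [i [Hji ->]].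
  apply orbit_act_tail. exists i. split; [exact (sg_le_trans mul s j i Hsg Hsj Hji) | reflexivity].
Qed.

Lemma orbit_act_near x b s y : displacement_le x b -> orbit act (act s x) y -> d x y <= b.
Proof. intros Hx Hy. apply orbit_act_tail in Hy as [j [_ ->]]. apply Hx. Qed.

Variable k : R.
Hypotheses (Htot : sg_le_total mul) (Hlip : strong_orbit_lipschitz act d k) (Hk : 0 <= k).

(* By totality, of any two points [tx], [t'x] one lies in the orbit of the other. *)
Lemma orbit_points_close x b :
  0 <= b -> displacement_le x b -> forall t t', d (act t x) (act t' x) <= k * b.
Proof.
  intros Hb Hx.
  assert (Hdist : Rbar_le (Dist d x (orbit act x)) b).
  { apply Dist_le. intros y [->|[s ->]]; [rewrite (dist_refl d Hm); exact Hb | apply Hx]. }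
  assert (Hle : forall t t', sg_le mul t t' -> d (act t x) (act t' x) <= k * b).
  { intros t t' Htt'.
    apply (Dist_le_dist d _ (orbit act (act t x))); [exact (Hlip t x x b Hdist)|].
    apply orbit_act_tail. now exists t'. }
  intros t t'. destruct (Htot t t') as [H|H]; [now apply Hle|].
  rewrite (Defs.dist_sym d Hm). now apply Hle.
Qed.

Variable N' : R.
Hypotheses (HN'0 : 0 <= N') (HN' : Rbar_lt (Ntilde d) N').

Lemma orbit_act_center x b s :
  0 <= b -> displacement_le x b ->
  exists z, cov d (orbit act (act s x)) z /\
    forall y, orbit act (act s x) y -> d z y <= N' * (k * b).
Proof.
  intros Hb Hx.
  destruct (admissible_center d Hm (cov d (orbit act (act s x))) N' (k * b) HN' HN'0)
    as [z [Hz Hzy]].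
  - apply (cov_admissible d (orbit act (act s x)) (act s x)). now left.
  - exists x, b. intros y Hy. apply Hy. intros y' Hy'. exact (orbit_act_near x b s y' Hx Hy').
  - intros u v Hu Hv. apply (cov_dist_le d Hm (orbit act (act s x)) _ u v); [|exact Hu | exact Hv].
    intros y y' Hy Hy'.
    apply orbit_act_tail in Hy as [j [_ ->]]. apply orbit_act_tail in Hy' as [j' [_ ->]].
    exact (orbit_points_close x b Hb Hx j j').
  - exists z. split; [exact Hz|]. intros y Hy. apply Hzy. now apply cov_incl.
Qed.


(* Property (P) applied to the orbit net [s x] and the net of centres of its tails. *)
Lemma asymptotic_center x b :
  property_P_nets d -> inhabited S -> 0 <= b -> displacement_le x b ->
  exists z, (forall s, cov d (orbit act (act s x)) z) /\
    forall eps, 0 < eps -> exists s, forall y, orbit act (act s x) y -> d z y <= N' * (k * b) + eps.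
Proof.
  intros HP HS Hb Hx. set (M := N' * (k * b)).
  assert (HM : 0 <= M) by (apply Rmult_le_pos; [|apply Rmult_le_pos]; assumption).
  destruct (functional_choice (fun s z => cov d (orbit act (act s x)) z /\
              forall y, orbit act (act s x) y -> d z y <= M)) as [zf Hzf].
  { intro s. exact (orbit_act_center x b s Hb Hx). }
  assert (Hzf_near : forall s, d x (zf s) <= b).
  { intro s. apply (proj1 (Hzf s)). intros y Hy. exact (orbit_act_near x b s y Hx Hy). }
  destruct (HP S (sg_le mul) HS (sg_le_refl mul) (fun s t u => sg_le_trans mul s t u Hsg)
              (fun s t => sg_le_directed mul s t Htot) (fun s => act s x) zf)
    as [z [Hz Hlim]].
  - exists x, b. exact Hx.
  - exists x, b. exact Hzf_near.
  - intro s. apply (cov_sub d _ _ _ (fun y Hy => cov_incl d _ y (proj2 (orbit_act_tail s x y) Hy))).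
    exact (proj1 (Hzf s)).
  - destruct HS as [s0].
    assert (Hlim_M : Rbar_le (net_limsup (sg_le mul) (fun s => d z (act s x))) M).
    { eapply Rbar_le_trans; [exact Hlim|].
      apply (net_limsup_le _ _ s0); [apply sg_le_refl|]. intros t _.
      assert (Hinner : Rbar_le (net_limsup (sg_le mul) (fun s => d (zf t) (act s x))) M).
      { apply (net_limsup_le _ _ t); [apply sg_le_refl|]. intros j Hj.
        apply (proj2 (Hzf t)), orbit_act_tail. now exists j. }
      destruct (net_limsup (sg_le mul) (fun s => d (zf t) (act s x))); simpl in *; tauto. }
    exists z. split.
    + intro s. apply (cov_sub d (fun y => exists j, sg_le mul s j /\ y = zf j));
        [|exact (Hz s)].
      intros y [j [Hsj ->]].
      apply (cov_sub d (orbit act (act j x))); [|exact (proj1 (Hzf j))].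
      intros y Hy. apply cov_incl. exact (orbit_act_mono s j x y Hsj Hy).
    + intros eps Heps.
      destruct (net_limsup_lt (sg_le mul) (fun s => d z (act s x)) (M + eps)) as [s Hs].
      { eapply Rbar_le_lt_trans; [exact Hlim_M | simpl; lra]. }
      exists s. intros y Hy. apply orbit_act_tail in Hy as [j [Hj ->]]. now apply Rlt_le, Hs.
Qed.

Lemma asymptotic_center_displacement x z (M : R) :
  (forall s, cov d (orbit act (act s x)) z) ->
  (forall eps, 0 < eps -> exists s, forall y, orbit act (act s x) y -> d z y <= M + eps) ->
  displacement_le z (k * M).
Proof.
  intros Hcov Hnear t. rewrite (Defs.dist_sym d Hm).
  apply Rle_mul_plus_epsilon; [exact Hk|]. intros eps Heps.
  destruct (Hnear eps Heps) as [s Hs].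
  pose proof (Hlip t z (act s x) (M + eps) (Dist_le d z _ _ Hs)) as Hts.
  rewrite <- Hact in Hts.
  apply (Hcov (mul t s)). intros y Hy. exact (Dist_le_dist d _ _ _ y Hts Hy).
Qed.

Lemma improve_displacement x b :
  property_P_nets d -> inhabited S -> 0 <= b -> displacement_le x b ->
  exists x', d x x' <= b /\ displacement_le x' (k * k * N' * b).
Proof.
  intros HP [s0] Hb Hx.
  destruct (asymptotic_center x b HP (inhabits s0) Hb Hx) as [z [Hcov Hnear]].
  exists z. split.
  - apply (Hcov s0). intros y Hy. exact (orbit_act_near x b s0 y Hx Hy).
  - intro t. replace (k * k * N' * b) with (k * (N' * (k * b))) by ring.
    exact (asymptotic_center_displacement x z _ Hcov Hnear t).
Qed.

Lemma fixed_point_of_approx z :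
  (forall eps, 0 < eps -> exists y, d z y <= eps /\ displacement_le y eps) ->
  forall t, act t z = z.
Proof.
  intros Happrox t. apply (Defs.dist_eq0 d Hm).
  apply Rle_antisym; [|apply (Defs.dist_ge0 d Hm)].
  rewrite <- (Rmult_0_r (2 * k + 2)).
  apply Rle_mul_plus_epsilon; [lra|]. intros eps Heps.
  destruct (Happrox eps Heps) as [y [Hzy Hy]].
  assert (Hzo : Rbar_le (Dist d z (orbit act y)) (2 * eps)).
  { apply Dist_le. intros w [->|[s ->]]; [lra|].
    pose proof (Defs.dist_tri d Hm z y (act s y)). pose proof (Hy s). lra. }
  assert (Htzy : d (act t z) (act t y) <= k * (2 * eps)).
  { apply (Dist_le_dist d _ (orbit act (act t y))); [exact (Hlip t z y _ Hzo) | now left]. }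
  pose proof (Defs.dist_tri d Hm (act t z) (act t y) z).
  pose proof (Defs.dist_tri d Hm (act t y) y z).
  rewrite (Defs.dist_sym d Hm (act t y) y) in *. rewrite (Defs.dist_sym d Hm y z) in *.
  pose proof (Hy t). nra.
Qed.

End SemigroupAction.

Theorem theorem5p4 (X : Type) (d : X -> X -> R)
  (S : Type) (mul : S -> S -> S) (act : S -> X -> X) (k : R) :
  is_metric d -> complete_metric d ->
  uniform_normal_structure d -> property_P_nets d ->
  is_semigroup mul -> is_action mul act -> sg_le_total mul ->
  strong_orbit_lipschitz act d k ->
  Rbar_lt (Finite k) (inv_sqrt_Rbar (Ntilde d)) ->
  (exists x, bounded_set d (orbit act x)) ->
  exists z, forall s, act s z = z.
Proof.
  intros Hm Hcomp Hunif HP Hsg Hact Htot Hlip Hk [x0 Hx0].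
  destruct (classic (inhabited S)) as [HS|HS].
  2:{ exists x0. intros s. contradiction HS. now constructor. }
  set (k' := Rmax k 0).
  assert (Hk'0 : 0 <= k') by apply Rmax_r.
  assert (Hlip' : strong_orbit_lipschitz act d k')
    by exact (strong_orbit_lipschitz_mono d act Hm k k' (Rmax_l k 0) Hlip).
  assert (Hk' : Rbar_lt k' (inv_sqrt_Rbar (Ntilde d))).
  { unfold k', Rmax. destruct (Rle_dec k 0); [exact (inv_sqrt_Rbar_pos _ Hunif) | exact Hk]. }
  destruct (exists_contraction_ratio (Ntilde d) k' Hk'0 Hunif Hk') as [N' [HN'0 [HN' Hc]]].
  destruct (bounded_orbit_displacement d act Hm x0 Hx0) as [b0 [Hb0 Hdisp0]].
  destruct (geometric_chain_limit d Hm (displacement_le d act) (k' * k' * N') b0 x0)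
    as [z Hz]; try assumption.
  - split; [|exact Hc]. apply Rmult_le_pos; [apply Rmult_le_pos|]; assumption.
  - intros x b b' Hbb' Hx t. specialize (Hx t). lra.
  - intros x b Hb Hx.
    exact (improve_displacement d mul act Hm Hsg Hact k' Htot Hlip' Hk'0 N' HN'0 HN'
             x b HP HS Hb Hx).
  - exists z. exact (fixed_point_of_approx d act Hm k' Hlip' Hk'0 z Hz).
Qed.
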